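(* Let $b,s,t,v$ be complex parameters and let the operators below act on the variable $a$. Then \[ T(bD_q)\left\{\frac{(as,at;q)_\infty}{(av;q)_\infty}\right\}= \frac{(as,at;q)_\infty}{(av;q)_\infty}\sum_{k=0}^\infty \frac{(-1)^kq^{\binom{k}{2}}(av;q)_k(bs)^k}{(q;q)_k(as,at;q)_k}\, {}_{2}\phi_1\left(\begin{array}{c} t/v,\ 0\\ atq^k\end{array};q,bv\right). \]
   Context: $q$ is a fixed complex number with $0<|q|<1$. For complex $a$: $(a;q)_\infty=\prod_{k\ge0}(1-aq^k)$, $(a;q)_n=(a;q)_\infty/(aq^n;q)_\infty$, and $(a_1,\dots,a_m;q)_n=(a_1;q)_n\cdots(a_m;q)_n$ (also for $n=\infty$). The basic hypergeometric series is ${}_r\phi_s\left(\begin{array}{c}a_1,\dots,a_r\\ b_1,\dots,b_s\end{array};q,x\right)=\sum_{n\ge0}\frac{(a_1,\dots,a_r;q)_n}{(q,b_1,\dots,b_s;q)_n}\big[(-1)^nq^{\binom n2}\big]^{1+s-r}x^n$. The $q$-derivative acting on $a$ is $D_q\{f(a)\}=\frac{f(a)-f(aq)}{a}$, $D_q^0$ is the identity, and the $q$-exponential operator is $T(bD_q)=\sum_{n=0}^\infty \frac{(bD_q)^n}{(q;q)_n}$, i.e. $T(bD_q)\{f\}=\sum_{n\ge0}\frac{b^n}{(q;q)_n}D_q^n\{f\}$. *)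

From HB Require Import structures.
From mathcomp Require Import all_boot all_order all_algebra.
From mathcomp Require Export complex.
From mathcomp Require Import all_classical all_reals all_analysis.
Set Implicit Arguments. Unset Strict Implicit. Unset Printing Implicit Defensive.
Import Order.TTheory GRing.Theory Num.Theory.
Import numFieldTopology.Exports numFieldNormedType.Exports.
Local Open Scope classical_set_scope.
Local Open Scope ring_scope.
Local Open Scope complex_scope.

(* the complex numbers over R, seen as a numClosedFieldType so that the
   generic (norm-induced) topology/normed-module instances apply *)
Definition Cplx (R : realType) : numClosedFieldType := R[i].

Section QDefs.
Variable R : realType.
Notation C := (Cplx R).

Definition qpoch (a q : C) (n : nat) : C := \prod_(k < n) (1 - a * q ^+ k).

Definition qpoch_inf (a q : C) : C := limn (qpoch a q).

Definition Dq (q : C) (f : C -> C) : C -> C := fun a => (f a - f (a * q)) / a.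

Definition Dqn (q : C) (n : nat) (f : C -> C) : C -> C := iter n (Dq q) f.

Definition Tq_term (q b : C) (f : C -> C) (a : C) (n : nat) : C :=
  b ^+ n / qpoch q q n * Dqn q n f a.

Definition Tq (q b : C) (f : C -> C) (a : C) : C :=
  limn (series (Tq_term q b f a)).

(* n-th term of 2phi1(a1,a2;b1;q,x)  (here 1+s-r = 0, so no extra factor) *)
Definition phi21_term (a1 a2 b1 q x : C) (n : nat) : C :=
  qpoch a1 q n * qpoch a2 q n / (qpoch q q n * qpoch b1 q n) * x ^+ n.

Definition phi21 (a1 a2 b1 q x : C) : C := limn (series (phi21_term a1 a2 b1 q x)).

End QDefs.

(* Along the orbit a q^j the q-derivative acts on sequences, and the function of
   the theorem factors as f(a q^j) = f(a) (as;q)_j^-1 (av;q)_j / (at;q)_j.  The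
   q-Leibniz rule expands D_q^n of this product into a q-binomial sum whose two
   factors are explicit: D_q^k maps (as;q)_j^-1 to (-s)^k q^C(k,2) (as;q)_(j+k)^-1,
   and D_q^m maps (av;q)_j/(at;q)_j to v^m (t/v;q)_m (av;q)_j/(at;q)_(j+m).  Hence
   b^n/(q;q)_n D_q^n f(a) = f(a) sum_(k+m=n) c_k phi_k(m), where phi_k(m) is the
   m-th term of the 2phi1 with lower parameter atq^k.  The coefficients c_k decay
   faster than any geometric sequence (because of q^C(k,2)) and
   |phi_k(m)| <= K r^m uniformly in k for any r >= |bv|, so this diagonal series
   can be summed along k first. *)

From HB Require Import structures.
From mathcomp Require Import all_boot all_order all_algebra.
From mathcomp Require Import complex.
From mathcomp Require Import all_classical all_reals all_analysis.
From mathcomp Require Import ring.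
Set Implicit Arguments. Unset Strict Implicit. Unset Printing Implicit Defensive.
Import Order.TTheory GRing.Theory Num.Theory.
Import numFieldTopology.Exports numFieldNormedType.Exports.
Local Open Scope classical_set_scope.
Local Open Scope ring_scope.
Local Open Scope complex_scope.

Lemma geometric_sum_mul {F : comPzRingType} (r : F) n :
  \sum_(k < n) r ^+ k * (1 - r) = 1 - r ^+ n.
Proof. by rewrite -mulr_suml mulrC -[1 - r]opprB -[1 - _ ^+ n]opprB subrX1 mulNr. Qed.

Lemma series0 {V : zmodType} (u : V ^nat) : series u 0 = 0.
Proof. by rewrite /series /= big_geq. Qed.

Lemma normrM_le {F : numDomainType} (x y X Y : F) :
  `|x| <= X -> `|y| <= Y -> `|x * y| <= X * Y.
Proof. by move=> xX yY; rewrite normrM; apply: ler_pM. Qed.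

Section WeierstrassProduct.
Variable F : numDomainType.

Lemma Weierstrass_prod_lb (y : nat -> F) n : (forall k, 0 <= y k <= 1) ->
  1 - \sum_(k < n) y k <= \prod_(k < n) (1 - y k).
Proof.
move=> y01; elim: n => [|n IH]; first by rewrite !big_ord0 subr0.
rewrite !big_ord_recr /=; have /andP [y0 y1] := y01 n.
set S := \sum_(k < n) y k.
have S0 : 0 <= S by apply: sumr_ge0 => k _; have /andP [] := y01 k.
apply: (@le_trans _ _ ((1 - S) * (1 - y n))); last by rewrite ler_wpM2r // subr_ge0.
have -> : (1 - S) * (1 - y n) = 1 - (S + y n) + S * y n by ring.
by rewrite lerDl mulr_ge0.
Qed.

Lemma Weierstrass_prod_ub (y : nat -> F) n : (forall k, 0 <= y k) ->
  \prod_(k < n) (1 + y k) * (1 - \sum_(k < n) y k) <= 1.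
Proof.
move=> y0; elim: n => [|n IH]; first by rewrite !big_ord0 subr0 mulr1.
rewrite !big_ord_recr /=; apply: le_trans IH.
set S := \sum_(k < n) y k; set P := \prod_(k < n) (1 + y k).
have S0 : 0 <= S by apply: sumr_ge0.
have P0 : 0 <= P by apply: prodr_ge0 => k _; rewrite addr_ge0.
have -> : P * (1 - S) = P * (1 + y n) * (1 - (S + y n)) + P * (y n * S + y n ^+ 2) by ring.
by rewrite lerDl mulr_ge0 // addr_ge0 ?mulr_ge0 ?sqr_ge0.
Qed.

End WeierstrassProduct.

Section ComplexSequences.
Context {R : realType}.
Local Notation C := (Cplx R).

Lemma RRe_ge0 {r : C} : 0 <= r -> (complex.Re r)%:C = r.
Proof. by move=> r0; rewrite RRe_real // ger0_real. Qed.

Lemma exists_expr_lt {r e : C} : 0 <= r -> r < 1 -> 0 < e -> exists N, r ^+ N < e.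
Proof.
move=> r0 r1 e0.
have r0' : 0 <= complex.Re r by rewrite -lecR RRe_ge0.
have r1' : `|complex.Re r| < 1 by rewrite ger0_norm // -ltcR RRe_ge0.
have e0' : 0 < complex.Re e by rewrite -ltcR RRe_ge0 // ltW.
have /cvgrPdist_lt /(_ _ e0') [N _ /(_ N (leqnn N))] := cvg_geometric 1 r1'.
rewrite /geometric /= sub0r normrN mul1r ger0_norm ?exprn_ge0 // => hN.
by exists N; rewrite -(RRe_ge0 r0) -(RRe_ge0 (ltW e0)) -rmorphXn ltcR.
Qed.

Lemma normc_ge_Im (z : C) : `|complex.Im z|%:C <= `|z|.
Proof.
have := normc_ge_Re (z * 'i%C).
by rewrite ReiNIm normrN normrM complexiE normCi mulr1.
Qed.

Lemma normc_le_ReIm (z : C) : `|z| <= (`|complex.Re z| + `|complex.Im z|)%:C.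
Proof.
rewrite {1}[z]complexE rmorphD /=; apply: le_trans (ler_normD _ _) _.
by rewrite normrM complexiE normCi mul1r !normc_def /= !expr0n /= !addr0 !sqrtr_sqr.
Qed.

(* [R[i]] has no [completeType] instance: completeness is inherited from [R]
   through the real and imaginary parts. *)
Definition cauchy_seq (u : nat -> C) := forall e : C, 0 < e ->
  exists N, forall n, (N <= n)%N -> `|u n - u N| < e.

Lemma cauchy_seq_cvg_proj (p : C -> R) (u : nat -> C) :
  (forall x y, `|p x - p y|%:C <= `|x - y|) ->
  cauchy_seq u -> cvg ((fun n => p (u n)) @ \oo).
Proof.
move=> p_lip cu; apply: cauchy_cvg; apply: cauchy_exP => e e0.
have [N HN] : exists N, forall n, (N <= n)%N -> `|u n - u N| < e%:C.
  by apply: cu; rewrite ltcR.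
exists (p (u N)), N => // n /= Nn.
by rewrite /ball /= -ltcR distrC; apply: le_lt_trans (p_lip _ _) (HN _ Nn).
Qed.

Lemma cauchy_seq_cvg (u : nat -> C) : cauchy_seq u -> cvg (u @ \oo).
Proof.
move=> cu.
have Re_lip (x y : C) : `|complex.Re x - complex.Re y|%:C <= `|x - y|.
  by rewrite -raddfB; exact: normc_ge_Re.
have Im_lip (x y : C) : `|complex.Im x - complex.Im y|%:C <= `|x - y|.
  by rewrite -raddfB; exact: normc_ge_Im.
have cRe := cauchy_seq_cvg_proj Re_lip cu.
have cIm := cauchy_seq_cvg_proj Im_lip cu.
set lRe := lim _ in cRe; set lIm := lim _ in cIm.
apply: (cvgP ((lRe +i* lIm)%C : C)).
apply/cvgrPdist_lt => e e0.
have e2 : 0 < complex.Re e / 2 by rewrite divr_gt0 // -ltcR RRe_ge0 // ltW.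
have /cvgrPdist_lt /(_ _ e2) nRe := cRe.
have /cvgrPdist_lt /(_ _ e2) nIm := cIm.
near=> n; apply: le_lt_trans (normc_le_ReIm _) _.
rewrite -(RRe_ge0 (ltW e0)) ltcR [complex.Re e]splitr /= !raddfB /=.
by apply: ltrD; near: n.
Unshelve. all: by end_near.
Qed.

Section GeometricIncrements.
Variables (u : nat -> C) (K r : C).
Hypotheses (K0 : 0 <= K) (r0 : 0 <= r) (r1 : r < 1).
Hypothesis du : forall n, `|u n.+1 - u n| <= K * r ^+ n.

Lemma geometric_increments_dist n m :
  `|u (n + m)%N - u n| * (1 - r) <= K * r ^+ n * (1 - r ^+ m).
Proof.
have r1' : 0 <= 1 - r by rewrite subr_ge0 ltW.
elim: m => [|m IH]; first by rewrite addn0 subrr normr0 mul0r expr0 subrr mulr0.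
rewrite addnS -[u _.+1 - _](subrKA (u (n + m)%N)).
apply: le_trans (ler_wpM2r r1' (ler_normD _ _)) _; rewrite mulrDl.
apply: le_trans (lerD (ler_wpM2r r1' (du _)) IH) _.
by rewrite exprD exprS le_eqVlt; apply/orP; left; apply/eqP; ring.
Qed.

Lemma geometric_increments_cvg :
  cvg (u @ \oo) /\ forall n, `|limn u - u n| <= K * r ^+ n / (1 - r).
Proof.
have r1' : 0 < 1 - r by rewrite subr_gt0.
have dist n m : (n <= m)%N -> `|u m - u n| <= K * r ^+ n / (1 - r).
  move=> nm; rewrite -(subnKC nm) ler_pdivlMr //.
  apply: le_trans (geometric_increments_dist _ _) _.
  by rewrite ler_piMr ?mulr_ge0 ?exprn_ge0 // lerBlDr lerDl exprn_ge0.
have cu : cvg (u @ \oo).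
  apply: cauchy_seq_cvg => e e0.
  have [N rN] : exists N, r ^+ N < e * (1 - r) / (K + 1).
    by apply: exists_expr_lt => //; rewrite divr_gt0 ?mulr_gt0 // ltr_wpDl.
  exists N => n Nn; apply: le_lt_trans (dist _ _ Nn) _.
  rewrite ltr_pdivlMr ?ltr_wpDl // in rN; rewrite ltr_pdivrMr //.
  by apply: le_lt_trans rN; rewrite mulrC ler_wpM2l ?exprn_ge0 ?lerDl.
split=> // n; apply/ler_addgt0Pr => e e0.
have /cvgrPdist_lt /(_ e e0) [N _ HN] := cu.
rewrite -[limn u - u n](subrKA (u (maxn N n))).
apply: le_trans (ler_normD _ _) _; rewrite addrC lerD ?dist ?leq_maxr // ltW //.
exact/HN/leq_maxl.
Qed.

End GeometricIncrements.

Lemma series_geometric_tail (u : nat -> C) (K r : C) : 0 <= K -> 0 <= r -> r < 1 ->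
  (forall n, `|u n| <= K * r ^+ n) ->
  cvg (series u @ \oo) /\
  forall n, `|limn (series u) - series u n| <= K * r ^+ n / (1 - r).
Proof. by move=> K0 r0 r1 ur; apply: geometric_increments_cvg => // n; rewrite seriesSB. Qed.

Lemma cvg_geometric_dist (u : nat -> C) (l K r : C) : 0 <= K -> 0 <= r -> r < 1 ->
  (forall n, `|l - u n| <= K * r ^+ n) -> u @ \oo --> l.
Proof.
move=> K0 r0 r1 lu; apply/cvgrPdist_lt => e e0.
have [N rN] := exists_expr_lt r0 r1 (divr_gt0 e0 (ltr_wpDl K0 ltr01)).
exists N => // n /= Nn; apply: le_lt_trans (lu n) _.
apply: (@le_lt_trans _ _ ((K + 1) * r ^+ N)).
  by apply: ler_pM; rewrite ?exprn_ge0 ?lerDl // ler_wiXn2l // ltW.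
by rewrite mulrC -ltr_pdivlMr ?ltr_wpDl.
Qed.

Lemma bounded_from_index (u : nat -> C) J c : 0 <= c ->
  (forall m, `|u (J + m)%N| <= c * `|u J|) -> exists U, 0 <= U /\ forall n, `|u n| <= U.
Proof.
move=> c0 uJ; set S := \sum_(i < J.+1) `|u i|.
have S0 : 0 <= S by apply: sumr_ge0.
have le_S n : (n <= J)%N -> `|u n| <= S.
  by move=> nJ; rewrite /S (bigD1 (Ordinal (nJ : n < J.+1)%N)) //= lerDl sumr_ge0.
exists (S + c * S); split=> [|n]; first by rewrite addr_ge0 ?mulr_ge0.
have [nJ|/ltnW Jn] := leqP n J; first by rewrite (le_trans (le_S _ nJ)) ?lerDl ?mulr_ge0.
rewrite -(subnKC Jn); apply: le_trans (uJ _) _.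
by rewrite ler_wpDl // ler_wpM2l // le_S.
Qed.

Lemma exists_geometric_majorant (r : C) : 0 <= r -> r < 1 ->
  exists sg c : C, [/\ r <= sg, sg < 1, 0 <= c & forall N, N%:R * r ^+ N <= c * sg ^+ N].
Proof.
move=> r0 r1; set sg := (1 + r) / 2.
have sg0 : 0 < sg by rewrite divr_gt0 // ltr_wpDr.
have rsg : r < sg by rewrite ltr_pdivlMr // mulrDr mulr1 ltrD2r.
set th := r / sg.
have th0 : 0 <= th by rewrite divr_ge0 // ltW.
have th1 : th < 1 by rewrite ltr_pdivrMr // mul1r.
have th1' : 0 < 1 - th by rewrite subr_gt0.
exists sg, (1 - th)^-1; split; first exact: ltW.
- by rewrite ltr_pdivrMr // mul1r ltrD2l.
- by rewrite invr_ge0 ltW.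
move=> N; have -> : r = th * sg by rewrite /th divfK // lt0r_neq0.
rewrite exprMn mulrA ler_pM2r ?exprn_gt0 //.
rewrite -[(1 - th)^-1]mul1r ler_pdivlMr //.
apply: le_trans (_ : \sum_(k < N) th ^+ k * (1 - th) <= _); last first.
  by rewrite geometric_sum_mul lerBlDr lerDl exprn_ge0.
rewrite mulr_natl -[in X in _ *+ X](card_ord N) -sumr_const mulr_suml.
apply: ler_sum => k _; rewrite ler_pM2r //.
by apply: ler_wiXn2l => //; [exact: ltW | exact: ltnW].
Qed.

End ComplexSequences.

Section DiagonalSeries.
Context {R : realType}.
Local Notation C := (Cplx R).
Variables (al : nat -> C) (ph : nat -> nat -> C).

Definition diag_term (n : nat) : C := \sum_(k < n.+1) al k * ph k (n - k)%N.

Lemma series_diag N : series diag_term N = \sum_(k < N) al k * series (ph k) (N - k)%N.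
Proof.
elim: N => [|N IH]; first by rewrite series0 big_ord0.
rewrite seriesSr IH [in RHS]big_ord_recr /= subSnn.
under [in RHS]eq_bigr => k _ do rewrite (subSn (ltnW (ltn_ord k))) seriesSr mulrDr.
rewrite big_split /= -addrA; congr (_ + _).
rewrite /diag_term big_ord_recr /= subnn; congr (_ + _).
by rewrite seriesSr series0 add0r.
Qed.

Variables (K1 K2 r : C).
Hypotheses (K10 : 0 <= K1) (K20 : 0 <= K2) (r0 : 0 <= r) (r1 : r < 1).
Hypotheses (al_le : forall k, `|al k| <= K1 * r ^+ k)
  (ph_le : forall k m, `|ph k m| <= K2 * r ^+ m).

(* The partial sums of the two series differ by at most N K1 K2 r^N / (1 - r),
   which is dominated by a geometric sequence of ratio sg < 1. *)
Lemma diag_series_cvg :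
  [/\ forall k, cvg (series (ph k) @ \oo),
      cvg (series (fun k => al k * limn (series (ph k))) @ \oo) &
      series diag_term @ \oo --> limn (series (fun k => al k * limn (series (ph k))))].
Proof.
have r1' : 0 < 1 - r by rewrite subr_gt0.
have ph_tail k := series_geometric_tail K20 r0 r1 (ph_le k).
set L := fun k => limn (series (ph k)); set Y := fun k => al k * L k.
set KK := K1 * (K2 / (1 - r)).
have KK0 : 0 <= KK by rewrite mulr_ge0 // divr_ge0 // ltW.
have Y_le k : `|Y k| <= KK * r ^+ k.
  have [_ /(_ 0%N)] := ph_tail k; rewrite series0 subr0 expr0 mulr1 => Lk.
  by rewrite normrM mulrAC; apply: ler_pM.
have [cY Y_tail] := series_geometric_tail KK0 r0 r1 Y_le.
have diag_dist N : `|series Y N - series diag_term N| <= N%:R * (KK * r ^+ N).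
  rewrite series_diag seriesEord -sumrB; apply: le_trans (ler_norm_sum _ _ _) _.
  rewrite mulr_natl -[in X in _ *+ X](card_ord N) -sumr_const.
  apply: ler_sum => k _; rewrite -mulrBr normrM.
  have [_ /(_ (N - k)%N)] := ph_tail k => tail_le.
  apply: le_trans (ler_pM (normr_ge0 _) (normr_ge0 _) (al_le k) tail_le) _.
  have -> : r ^+ N = r ^+ k * r ^+ (N - k) by rewrite -exprD subnKC // ltnW.
  by rewrite le_eqVlt; apply/orP; left; apply/eqP; rewrite /KK; ring.
have [sg [c [rsg sg1 c0 Nr_le]]] := exists_geometric_majorant r0 r1.
split; [by move=> k; have [] := ph_tail k | exact: cY | ].
apply: (cvg_geometric_dist (K := KK / (1 - r) + KK * c) (r := sg)).
- by apply: addr_ge0; [rewrite divr_ge0 // ltW | exact: mulr_ge0].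
- exact: le_trans rsg.
- exact: sg1.
move=> N; rewrite -[_ - series diag_term N](subrKA (series Y N)) mulrDl.
apply: le_trans (ler_normD _ _) _; apply: lerD.
  apply: le_trans (Y_tail N) _; rewrite mulrAC; apply: ler_wpM2l.
    by rewrite divr_ge0 // ltW.
  by apply: lerXn2r; rewrite ?nnegrE // (le_trans r0).
apply: le_trans (diag_dist N) _; rewrite mulrCA -[KK * c * _]mulrA.
by apply: ler_wpM2l => //; exact: Nr_le.
Qed.

End DiagonalSeries.

Section QPochhammer.
Context {R : realType}.
Local Notation C := (Cplx R).
Variable q : C.

Lemma qpoch0 (x : C) : qpoch x q 0 = 1.
Proof. by rewrite /qpoch big_ord0. Qed.

Lemma qpochS (x : C) n : qpoch x q n.+1 = qpoch x q n * (1 - x * q ^+ n).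
Proof. by rewrite /qpoch big_ord_recr. Qed.

Lemma qpochSl (x : C) n : qpoch x q n.+1 = (1 - x) * qpoch (x * q) q n.
Proof.
rewrite /qpoch big_ord_recl /= expr0 mulr1; congr (_ * _).
by apply: eq_bigr => i _; rewrite /bump /= add1n exprS mulrA.
Qed.

Lemma qpochD (x : C) k m : qpoch x q (k + m) = qpoch x q k * qpoch (x * q ^+ k) q m.
Proof.
elim: m => [|m IH]; first by rewrite addn0 qpoch0 mulr1.
by rewrite addnS !qpochS IH exprD mulrA -mulrA.
Qed.

Lemma qpoch0n n : qpoch 0 q n = 1.
Proof. by rewrite /qpoch big1 // => i _; rewrite mul0r subr0. Qed.

Lemma qpoch_neq0 (x : C) : (forall k, x * q ^+ k != 1) -> forall n, qpoch x q n != 0.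
Proof.
move=> x1; elim=> [|n IH]; first by rewrite qpoch0 oner_neq0.
by rewrite qpochS mulf_neq0 // subr_eq0 eq_sym.
Qed.

End QPochhammer.

Section QPochhammerBounds.
Context {R : realType}.
Local Notation C := (Cplx R).
Variable q : C.
Hypothesis hq1 : `|q| < 1.

Lemma qexpS_neq1 k : q * q ^+ k != 1.
Proof.
apply/eqP => /(congr1 Num.norm); rewrite normr1 -exprS normrX => qk1.
by have := exprn_ilt1 k.+1 (normr_ge0 q) hq1; rewrite qk1 ltxx.
Qed.

Lemma qpoch_small_norm (x : C) : `|x| <= (1 - `|q|) / 2 ->
  forall n, 1 / 2 <= `|qpoch x q n| <= 2.
Proof.
move=> x_small n; have q1 : 0 < 1 - `|q| by rewrite subr_gt0.
have half0 : 0 < 1 / 2 :> C by rewrite divr_gt0.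
have half1 : 1 / 2 <= 1 :> C by rewrite ler_pdivrMr // mul1r ler1n.
set y := fun k => `|x| * `|q| ^+ k.
have y0 k : 0 <= y k by rewrite mulr_ge0 ?exprn_ge0.
have x_half : `|x| <= 1 / 2.
  by apply: le_trans x_small _; rewrite ler_wpM2r ?invr_ge0 // lerBlDr lerDl.
have y_half k : y k <= 1 / 2.
  by apply: le_trans x_half; rewrite /y ler_piMr ?exprn_ile1 // ltW.
have sum_half : 1 / 2 <= 1 - \sum_(k < n) y k.
  rewrite lerBrDr; apply: le_trans (_ : 1 / 2 + 1 / 2 <= _); last by rewrite -splitr.
  rewrite lerD2l -(ler_pM2r q1); apply: le_trans (_ : `|x| <= _).
    rewrite mulr_suml; under eq_bigr do rewrite /y -mulrA.
    by rewrite -mulr_sumr geometric_sum_mul ler_piMr // lerBlDr lerDl exprn_ge0.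
  by apply: le_trans x_small _; rewrite mul1r mulrC.
rewrite /qpoch normr_prod; apply/andP; split.
  apply: le_trans sum_half _; apply: le_trans (@Weierstrass_prod_lb _ y n _) _.
    by move=> k; rewrite y0 (le_trans (y_half k)).
  apply: ler_prod => k _; rewrite subr_ge0 (le_trans (y_half k)) //=.
  by apply: le_trans (lerB_dist _ _); rewrite normr1 normrM normrX.
have prod_ge0 : 0 <= \prod_(k < n) (1 + y k) by apply: prodr_ge0 => k _; rewrite addr_ge0.
apply: le_trans (_ : \prod_(k < n) (1 + y k) <= _).
  apply: ler_prod => k _; rewrite normr_ge0 /=.
  by apply: le_trans (ler_normB _ _) _; rewrite normr1 normrM normrX.
rewrite -(ler_pM2r half0) [in X in _ <= X]mul1r divff ?pnatr_eq0 //.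
exact: le_trans (ler_wpM2l prod_ge0 sum_half) (Weierstrass_prod_ub n y0).
Qed.

Lemma exists_qshift_small (x : C) : exists J, `|x * q ^+ J| <= (1 - `|q|) / 2.
Proof.
have x1 : 0 < `|x| + 1 by rewrite ltr_wpDl.
have e0 : 0 < (1 - `|q|) / 2 / (`|x| + 1) by rewrite !divr_gt0 // subr_gt0.
have [J qJ] := exists_expr_lt (normr_ge0 q) hq1 e0.
exists J; rewrite normrM normrX; apply: ltW.
rewrite ltr_pdivlMr // in qJ; apply: le_lt_trans qJ.
by rewrite mulrC ler_wpM2l ?exprn_ge0 // lerDl.
Qed.

Lemma qpoch_bounded (x : C) : exists U, 0 <= U /\ forall n, `|qpoch x q n| <= U.
Proof.
have [J /qpoch_small_norm xJ] := exists_qshift_small x.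
apply: (@bounded_from_index _ _ J 2) => // m.
by rewrite qpochD normrM mulrC; apply: ler_wpM2r => //; case/andP: (xJ m).
Qed.

Lemma qpoch_inv_bounded (x : C) : (forall k, x * q ^+ k != 1) ->
  exists V, 0 <= V /\ forall n, `|(qpoch x q n)^-1| <= V.
Proof.
move=> x1; have [J /qpoch_small_norm xJ] := exists_qshift_small x.
apply: (@bounded_from_index _ (fun n => (qpoch x q n)^-1) J 2) => // m.
have /andP [xJm _] := xJ m.
have xJm0 : 0 < `|qpoch (x * q ^+ J) q m| by apply: lt_le_trans xJm; rewrite divr_gt0.
rewrite qpochD invfM normrM mulrC; apply: ler_wpM2r => //.
rewrite normfV -(ler_pM2r xJm0) mulVf ?lt0r_neq0 //.
apply: le_trans (_ : 2 * (1 / 2) <= _); first by rewrite mul1r divff // pnatr_eq0.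
by rewrite ler_pM2l.
Qed.

Lemma qpoch_cvg (x : C) : cvg (qpoch x q @ \oo).
Proof.
have [U [U0 xU]] := qpoch_bounded x.
suff dx n : `|qpoch x q n.+1 - qpoch x q n| <= U * `|x| * `|q| ^+ n.
  by case: (geometric_increments_cvg (mulr_ge0 U0 (normr_ge0 x)) (normr_ge0 q) hq1 dx).
rewrite qpochS (_ : _ * (1 - _) - _ = - (qpoch x q n * (x * q ^+ n))); last by ring.
rewrite normrN !normrM normrX mulrA.
by apply: ler_wpM2r; [exact: exprn_ge0 | apply: ler_wpM2r].
Qed.

Lemma qpoch_infSl (x : C) : qpoch_inf x q = (1 - x) * qpoch_inf (x * q) q.
Proof.
apply: cvg_lim => //; rewrite -cvg_shiftS.
under eq_fun do rewrite qpochSl.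
by apply: cvgMl_tmp; exact: qpoch_cvg.
Qed.

Lemma qpoch_inf_split (x : C) k : qpoch_inf x q = qpoch x q k * qpoch_inf (x * q ^+ k) q.
Proof.
elim: k => [|k IH]; first by rewrite qpoch0 expr0 mulr1 mul1r.
by rewrite IH qpoch_infSl qpochS exprSr !mulrA.
Qed.

Lemma qbin2_geometric_bound (c rho : C) : 0 <= c -> 0 < rho ->
  exists K, 0 <= K /\ forall k, `|q| ^+ 'C(k, 2) * c ^+ k <= K * rho ^+ k.
Proof.
move=> c0 rho0.
have [k0 qk0] := exists_expr_lt (normr_ge0 q) hq1 (divr_gt0 rho0 (ltr_wpDl c0 ltr01)).
set w := fun k => `|q| ^+ 'C(k, 2) * c ^+ k / rho ^+ k.
have w0 k : 0 <= w k by rewrite divr_ge0 ?mulr_ge0 ?exprn_ge0 // ltW.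
have wS k : w k.+1 = w k * (`|q| ^+ k * c / rho).
  have rho_neq0 := lt0r_neq0 rho0.
  by rewrite /w binS bin1 !exprD !exprS; field; rewrite expf_neq0 ?rho_neq0.
have w_decr k : (k0 <= k)%N -> w k.+1 <= w k.
  move=> k0k; rewrite wS; apply: ler_piMr => //; rewrite ler_pdivrMr // mul1r.
  apply: le_trans (_ : `|q| ^+ k0 * (c + 1) <= _); last by rewrite -ler_pdivlMr ?ltr_wpDl // ltW.
  apply: ler_pM; rewrite ?exprn_ge0 ?lerDl //.
  by apply: ler_wiXn2l => //; exact: ltW.
have [K [K0 wK]] : exists K, 0 <= K /\ forall k, `|w k| <= K.
  apply: (@bounded_from_index _ _ k0 1) => // m; rewrite mul1r !ger0_norm //.
  by elim: m => [|m IH]; rewrite ?addn0 // addnS (le_trans (w_decr _ _)) ?leq_addr.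
exists K; split=> // k; have := wK k.
by rewrite ger0_norm // ler_pdivrMr ?exprn_gt0.
Qed.

End QPochhammerBounds.

Section QDifference.
Context {R : realType}.
Local Notation C := (Cplx R).
Variables (q a : C).
Hypotheses (hq0 : q != 0) (ha : a != 0).

(* [D_q] read on the orbit [a q^j]: [u j] stands for [f (a q^j)]. *)
Definition qdiff (u : nat -> C) : nat -> C := fun j => (u j - u j.+1) / (a * q ^+ j).
Definition qdiffn n u := iter n qdiff u.

Lemma qdiffnS n u j : qdiffn n.+1 u j = (qdiffn n u j - qdiffn n u j.+1) / (a * q ^+ j).
Proof. by []. Qed.

Lemma Dqn_qdiffn (f : C -> C) n j :
  Dqn q n f (a * q ^+ j) = qdiffn n (fun i => f (a * q ^+ i)) j.
Proof.
elim: n j => [|n IH] j //=.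
by rewrite /Dq -/(Dqn q n f) -/(qdiffn n _) IH -mulrA -exprSr IH.
Qed.

Lemma qdiffnZ (c : C) (u : nat -> C) n j :
  qdiffn n (fun i => c * u i) j = c * qdiffn n u j.
Proof. by elim: n j => [|n IH] j //; rewrite !qdiffnS !IH -mulrBr mulrA. Qed.

Fixpoint qbinom (n k : nat) : C :=
  match n, k with
  | 0, 0 => 1
  | 0, _.+1 => 0
  | n'.+1, 0 => 1
  | n'.+1, k'.+1 => qbinom n' k' + q ^+ k'.+1 * qbinom n' k'.+1
  end.

Lemma qbinomn0 n : qbinom n 0 = 1. Proof. by case: n. Qed.

Lemma qbinom_small n k : (n < k)%N -> qbinom n k = 0.
Proof. by elim: n k => [|n IH] [|k] //= nk; rewrite !IH ?mulr0 ?addr0 // ltnW. Qed.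

Lemma qbinom_qpoch n k : (k <= n)%N ->
  qbinom n k * (qpoch q q k * qpoch q q (n - k)) = qpoch q q n.
Proof.
elim: n k => [|n IH] [|k] kn //.
- by rewrite /= !qpoch0 !mulr1.
- by rewrite qbinomn0 qpoch0 subn0 !mul1r.
rewrite subSS /=; move: kn; rewrite ltnS leq_eqVlt => /orP [/eqP->{k}|kn].
  rewrite (qbinom_small (ltnSn n)) mulr0 addr0 subnn qpoch0 mulr1 qpochS -[in RHS](IH n) //.
  by rewrite subnn qpoch0 mulr1 mulrA.
have := IH k (ltnW kn); have := IH k.+1 kn.
rewrite -(subnSK kn) !qpochS; set m := (n - k.+1)%N.
have -> : n = (k.+1 + m)%N by rewrite /m subnKC.
rewrite exprD exprS => IHk1 IHk.
transitivity ((1 - q * q ^+ k) * qpoch q q (k.+1 + m)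
  + q * q ^+ k * (1 - q * q ^+ m) * qpoch q q (k.+1 + m)); last by ring.
by rewrite -{1}IHk -IHk1; ring.
Qed.

Lemma qdiff_mul_step (u w : nat -> C) j k :
  (u j * w (j + k)%N - u j.+1 * w (j.+1 + k)%N) / (a * q ^+ j)
  = qdiff u j * w (j + k).+1 + q ^+ k * (u j * qdiff w (j + k)%N).
Proof.
rewrite /qdiff addSn exprD.
have qj : q ^+ j != 0 by rewrite expf_neq0.
have qk : q ^+ k != 0 by rewrite expf_neq0.
by field; rewrite qj qk ha.
Qed.

Lemma qdiffn_mul (u w : nat -> C) n j :
  qdiffn n (fun i => u i * w i) j =
  \sum_(k < n.+1) qbinom n k * (qdiffn k u j * qdiffn (n - k) w (j + k)%N).
Proof.
elim: n j => [|n IH] j.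
  by rewrite big_ord_recl big_ord0 /= addn0 mul1r addr0.
rewrite qdiffnS !IH -sumrB mulr_suml.
under eq_bigr do rewrite -mulrBr -mulrA qdiff_mul_step mulrDr.
rewrite big_split /= [RHS]big_ord_recl /= addn0 mul1r.
under [X in _ = _ + X]eq_bigr do rewrite /bump /= !add0n subSS mulrDl.
rewrite big_split /= addrCA; congr (_ + _).
  by apply: eq_bigr => i _; rewrite addnS.
rewrite big_ord_recl /= subn0 addn0 expr0 mul1r qbinomn0 mul1r; congr (_ + _).
rewrite [RHS]big_ord_recr /= (qbinom_small (ltnSn n)) mulr0 mul0r addr0.
apply: eq_bigr => i _.
by rewrite /bump /= !add0n !add1n -(subnSK (ltn_ord i)) mulrA [q ^+ _ * _]mulrC.
Qed.

End QDifference.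

Section Expansion.
Context {R : realType}.
Local Notation C := (Cplx R).
Variables (q a s t v b : C).
Hypotheses (hq0 : q != 0) (hq1 : `|q| < 1) (ha : a != 0) (hv : v != 0).
Hypotheses (hav : forall k, a * v * q ^+ k != 1) (has : forall k, a * s * q ^+ k != 1)
  (hat : forall k, a * t * q ^+ k != 1).

Local Notation qdiffn := (qdiffn q a).

Definition qratio (x : C) : C := qpoch_inf (x * s) q * qpoch_inf (x * t) q / qpoch_inf (x * v) q.

Definition sfactor (i : nat) : C := (qpoch (a * s) q i)^-1.
Definition vtfactor (m i : nat) : C := qpoch (a * v) q i / qpoch (a * t) q (i + m).

Lemma qratio_orbit i : qratio (a * q ^+ i) = qratio a * (sfactor i * vtfactor 0 i).
Proof.
rewrite /qratio /sfactor /vtfactor addn0 !(mulrAC a (q ^+ i)).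
rewrite (qpoch_inf_split hq1 (a * s) i) (qpoch_inf_split hq1 (a * t) i).
rewrite (qpoch_inf_split hq1 (a * v) i) invfM.
move: (qpoch_inf (a * v * q ^+ i) q)^-1 => w.
have s0 := qpoch_neq0 has i; have t0 := qpoch_neq0 hat i; have v0 := qpoch_neq0 hav i.
by field; rewrite s0 t0 v0.
Qed.

Lemma qdiffn_sfactor k j : qdiffn k sfactor j = (- s) ^+ k * q ^+ 'C(k, 2) * sfactor (j + k).
Proof.
elim: k j => [|k IH] j; first by rewrite expr0 bin0n expr0 !mul1r addn0.
rewrite qdiffnS !IH addSn addnS -mulrBr /sfactor qpochS.
have s0 := qpoch_neq0 has (j + k); have sjk : 1 - a * s * q ^+ (j + k) != 0.
  by rewrite subr_eq0 eq_sym.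
move: sjk; rewrite binS bin1 !exprD exprS => sjk.
by field; rewrite s0 sjk ha expf_neq0.
Qed.

Lemma qdiffn_vtfactor m i :
  qdiffn m (vtfactor 0) i = v ^+ m * qpoch (t / v) q m * vtfactor m i.
Proof.
elim: m i => [|m IH] i; first by rewrite qpoch0 !mul1r.
rewrite qdiffnS !IH -mulrBr /vtfactor addSn addnS !qpochS.
have t0 := qpoch_neq0 hat (i + m); have tim : 1 - a * t * q ^+ (i + m) != 0.
  by rewrite subr_eq0 eq_sym.
move: tim; rewrite exprD exprS => tim.
set P := qpoch (t / v) q m; set V := qpoch _ _ i; set T := qpoch _ _ (i + m).
by field; rewrite t0 tim ha hv expf_neq0.
Qed.

Definition coef (k : nat) : C :=
  (-1) ^+ k * q ^+ 'C(k, 2) * qpoch (a * v) q k * (b * s) ^+ k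
    / (qpoch q q k * (qpoch (a * s) q k * qpoch (a * t) q k)).

Definition phi_term (k m : nat) : C := phi21_term (t / v) 0 (a * t * q ^+ k) q (b * v) m.

Lemma leibniz_summandE k m :
  b ^+ (k + m) / qpoch q q (k + m) *
    (qbinom q (k + m) k * (qdiffn k sfactor 0 * qdiffn m (vtfactor 0) k))
  = coef k * phi_term k m.
Proof.
have qq0 n := qpoch_neq0 (qexpS_neq1 hq1) n.
have s0 := qpoch_neq0 has k; have t0 := qpoch_neq0 hat k.
have tk0 : qpoch (a * t * q ^+ k) q m != 0.
  by apply: qpoch_neq0 => l; rewrite -mulrA -exprD.
have qbinomE : qbinom q (k + m) k = qpoch q q (k + m) / (qpoch q q k * qpoch q q m).
  by rewrite -(qbinom_qpoch q (leq_addr m k)) addKn; field; rewrite !qq0.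
rewrite qdiffn_sfactor qdiffn_vtfactor qbinomE /vtfactor /sfactor /coef /phi_term.
rewrite /phi21_term qpoch0n (qpochD _ (a * t) k m) add0n exprD !exprMn (exprNn s k).
set P := qpoch (t / v) q m; set Q := q ^+ 'C(k, 2).
by field; rewrite !qq0 s0 t0 tk0.
Qed.

Lemma Tq_term_diag n :
  Tq_term q b qratio a n = qratio a * \sum_(k < n.+1) coef k * phi_term k (n - k).
Proof.
rewrite /Tq_term; have := Dqn_qdiffn q a qratio n 0; rewrite expr0 mulr1 => ->.
have -> : (fun i => qratio (a * q ^+ i)) = (fun i => qratio a * (sfactor i * vtfactor 0 i)).
  by apply: funext => i; exact: qratio_orbit.
rewrite qdiffnZ (qdiffn_mul hq0 ha) mulrCA mulr_sumr; congr (_ * _).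
apply: eq_bigr => -[k /= kn] _; rewrite ltnS in kn.
by have := leibniz_summandE k (n - k); rewrite subnKC // add0n.
Qed.

Lemma coef_geometric_bound r : 0 < r ->
  exists K, 0 <= K /\ forall k, `|coef k| <= K * r ^+ k.
Proof.
move=> r0; have [U [U0 hU]] := qpoch_bounded hq1 (a * v).
have [V1 [V10 hV1]] := qpoch_inv_bounded hq1 (qexpS_neq1 hq1).
have [V2 [V20 hV2]] := qpoch_inv_bounded hq1 has.
have [V3 [V30 hV3]] := qpoch_inv_bounded hq1 hat.
have [K [K0 hK]] := qbin2_geometric_bound hq1 (normr_ge0 (b * s)) r0.
exists (U * V1 * (V2 * V3) * K); split=> [|k]; first by rewrite !mulr_ge0.
have -> : coef k = (-1) ^+ k * qpoch (a * v) q k * (qpoch q q k)^-1 *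
    ((qpoch (a * s) q k)^-1 * (qpoch (a * t) q k)^-1) * (q ^+ 'C(k, 2) * (b * s) ^+ k).
  by rewrite /coef !invfM; ring.
rewrite -[X in _ <= X]mulrA; apply: normrM_le; last by rewrite normrM !normrX.
apply: normrM_le; last exact: normrM_le.
by apply: normrM_le => //; rewrite normrM normrX normrN normr1 expr1n mul1r.
Qed.

Lemma phi_term_geometric_bound r : `|b * v| <= r ->
  exists K, 0 <= K /\ forall k m, `|phi_term k m| <= K * r ^+ m.
Proof.
move=> bvr; have [U1 [U10 hU1]] := qpoch_bounded hq1 (t / v).
have [U2 [U20 hU2]] := qpoch_bounded hq1 (a * t).
have [V1 [V10 hV1]] := qpoch_inv_bounded hq1 (qexpS_neq1 hq1).
have [V3 [V30 hV3]] := qpoch_inv_bounded hq1 hat.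
exists (U1 * V1 * (U2 * V3)); split=> [|k m]; first by rewrite !mulr_ge0.
have shift : (qpoch (a * t * q ^+ k) q m)^-1 = qpoch (a * t) q k / qpoch (a * t) q (k + m).
  by rewrite qpochD invfM mulrA divff ?mul1r // qpoch_neq0.
have -> : phi_term k m = qpoch (t / v) q m * (qpoch q q m)^-1 *
    (qpoch (a * t) q k / qpoch (a * t) q (k + m)) * (b * v) ^+ m.
  by rewrite /phi_term /phi21_term qpoch0n -shift invfM; ring.
apply: normrM_le; last first.
  by rewrite normrX; apply: lerXn2r; rewrite ?nnegrE // (le_trans _ bvr).
by apply: normrM_le; exact: normrM_le.
Qed.

End Expansion.

Theorem mainTheorem1 (R : realType) (q b s t v a : Cplx R)
  (hq0 : q != 0) (hq1 : `|q| < 1)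
  (ha : a != 0) (hv : v != 0) (hbv : `|b * v| < 1)
  (hav : forall k : nat, a * v * q ^+ k != 1)
  (has : forall k : nat, a * s * q ^+ k != 1)
  (hat : forall k : nat, a * t * q ^+ k != 1) :
  let f : Cplx R -> Cplx R := fun x =>
    qpoch_inf (x * s) q * qpoch_inf (x * t) q / qpoch_inf (x * v) q in
  let c : nat -> Cplx R := fun k =>
    (-1) ^+ k * q ^+ 'C(k, 2) * qpoch (a * v) q k * (b * s) ^+ k
      / (qpoch q q k * (qpoch (a * s) q k * qpoch (a * t) q k))
      * phi21 (t / v) 0 (a * t * q ^+ k) q (b * v) in
  [/\ cvg (series (Tq_term q b f a) @ \oo),
      (forall k : nat, cvg (series (phi21_term (t / v) 0 (a * t * q ^+ k) q (b * v)) @ \oo)),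
      cvg (series c @ \oo) &
      Tq q b f a = f a * limn (series c)].
Proof.
move=> f c; set r := (1 + `|b * v|) / 2.
have r0 : 0 < r by rewrite divr_gt0 // ltr_wpDr.
have r1 : r < 1 by rewrite ltr_pdivrMr // mul1r ltrD2l.
have bvr : `|b * v| <= r by rewrite ler_pdivlMr // mulrDr mulr1 lerD2r ltW.
have [K1 [K10 coef_le]] := coef_geometric_bound v b hq1 has hat r0.
have [K2 [K20 phi_le]] := phi_term_geometric_bound hq1 hat bvr.
have [phi_cvg c_cvg diag_cvg] := diag_series_cvg K10 K20 (ltW r0) r1 coef_le phi_le.
have T_lim : series (Tq_term q b f a) @ \oo --> f a * limn (series c).
  have -> : series (Tq_term q b f a) =
      (fun N => f a * series (diag_term (coef q a s t v b) (phi_term q a t v b)) N).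
    apply: funext => N; rewrite !seriesEord /= mulr_sumr.
    by apply: eq_bigr => n _; exact: Tq_term_diag.
  exact: cvgMl_tmp diag_cvg.
split; [exact: cvgP T_lim | exact: phi_cvg | exact: c_cvg | exact: cvg_lim T_lim].
Qed.
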